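(* Let $A\in\mathbb{R}^{n\times n}$ be a range monotone $Z$-matrix with $\mathbb{R}^n_+\cap R(A)\ne\{0\}$. Then the group inverse $A^{\#}$ exists and is a Karamardian matrix.
   Context: A $Z$-matrix is a real square matrix whose off-diagonal entries are nonpositive. A square matrix $M$ is range monotone if $Mx\ge 0$ and $x\in R(M)$ imply $x\ge 0$ (range monotone matrices are group invertible). The group inverse $A^{\#}$ is the unique $X$ with $AXA=A$, $XAX=X$, $AX=XA$; $R(A^{\#})=R(A)$. For $M\in\mathbb{R}^{n\times n}$ let $K_M=\mathbb{R}^n_+\cap R(M)$ and $K_M^*=\{y\in\mathbb{R}^n: x^Ty\ge 0 \text{ for all } x\in K_M\}$ (one has $K_M^*=\mathbb{R}^n_++N(M^T)$, with interior $\{a+b: a>0,\ b\in N(M^T)\}$). For $q\in\mathbb{R}^n$, LCP$(M,K_M,q)$ is to find $x$ with $x\in K_M$, $Mx+q\in K_M^*$, $x^T(Mx+q)=0$. $M$ is a Karamardian matrix if $K_M\ne\{0\}$ and there exists $d$ in the interior of $K_M^*$ such that both LCP$(M,K_M,0)$ and LCP$(M,K_M,d)$ have $x=0$ as their only solution. *)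

From HB Require Import structures.
From mathcomp Require Import all_boot all_order all_algebra.
From mathcomp Require Import reals.
Set Implicit Arguments. Unset Strict Implicit. Unset Printing Implicit Defensive.
Import Order.TTheory GRing.Theory Num.Theory.
Local Open Scope ring_scope.

Section Defs.
Variable R : realType.
Variable n : nat.
Implicit Types (M X : 'M[R]_n) (x y d : 'cV[R]_n).

Definition nonneg x : Prop := forall i, 0 <= x i 0.
Definition posvec x : Prop := forall i, 0 < x i 0.

Definition Zmatrix M : Prop := forall i j, i != j -> M i j <= 0.

Definition in_range M x : Prop := exists y, x = M *m y.
Definition in_null M x : Prop := M *m x = 0.

Definition range_monotone M : Prop :=
  forall x, nonneg (M *m x) -> in_range M x -> nonneg x.

Definition group_inverse M X : Prop :=
  [/\ M *m X *m M = M, X *m M *m X = X & M *m X = X *m M].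

Definition KM M x : Prop := nonneg x /\ in_range M x.

Definition KM_dual M y : Prop := forall x, KM M x -> 0 <= (x^T *m y) 0 0.

(* interior of K_M^*, via the characterization {a + b : a > 0, b in N(M^T)} *)
Definition KM_dual_int M d : Prop :=
  exists a b, [/\ posvec a, in_null M^T b & d = a + b].

Definition LCP_sol M q x : Prop :=
  [/\ KM M x, KM_dual M (M *m x + q) & (x^T *m (M *m x + q)) 0 0 = 0].

Definition karamardian M : Prop :=
  (exists x, KM M x /\ x <> 0) /\
  exists d, [/\ KM_dual_int M d,
                (forall x, LCP_sol M 0 x -> x = 0) &
                (forall x, LCP_sol M d x -> x = 0)].

End Defs.

From HB Require Import structures.
From mathcomp Require Import all_boot all_order all_algebra.
From mathcomp Require Import reals.
Set Implicit Arguments. Unset Strict Implicit. Unset Printing Implicit Defensive.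
Import Order.TTheory GRing.Theory Num.Theory.
Local Open Scope ring_scope.

(* Range monotonicity makes A injective on R(A), so rank (A^2) = rank A and A
   has a group inverse X, with R(X) = R(A) and A X = X A the projection onto
   R(A).  For q >= 0, a solution x of LCP(X, K_X, q) satisfies x = A y with
   y = X x >= 0, and complementarity forces x_i y_i = 0 for every i.  The
   Z-sign pattern then gives x_i = sum_(k <> i) A_ik y_k <= 0 whenever
   y_i = 0, so x = 0.  Both q = 0 and q = 1 (interior of K_X^* ) are such
   right-hand sides. *)

Lemma mxrank_sqr_eq (F : fieldType) (n : nat) (A : 'M[F]_n) :
  (forall y : 'cV_n, A *m (A *m y) = 0 -> A *m y = 0) ->
  \rank (A *m A) = \rank A.
Proof.
(* mxrank_mul_ker is about row spaces, hence the transposes. *)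
move=> injA; rewrite -mxrank_tr -[RHS]mxrank_tr trmx_mul.
have := mxrank_mul_ker A^T A^T.
set C := (A^T :&: kermx A^T)%MS.
suff -> : C = 0 by rewrite mxrank0 addn0.
have /submxP [D eD] : (C <= A^T)%MS by exact: capmxSl.
have /sub_kermxP CA0 : (C <= kermx A^T)%MS by exact: capmxSr.
have eCt : C^T = A *m D^T by rewrite eD trmx_mul trmxK.
have ACt0 : A *m C^T = 0 by rewrite -[A in A *m _]trmxK -trmx_mul CA0 trmx0.
apply: trmx_inj; rewrite trmx0; apply/matrixP => i j.
have colj0 : col j C^T = 0.
  rewrite eCt !colE -mulmxA; apply: injA.
  by rewrite !mulmxA -(mulmxA A A) -eCt ACt0 mul0mx.
by have := congr1 (fun v : 'cV_n => v i 0) colj0; rewrite !mxE.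
Qed.

Section RealMatrices.
Variables (R : realType) (n : nat).
Implicit Types (A X : 'M[R]_n) (x y q : 'cV[R]_n).

Lemma range_monotone_inj A : range_monotone A ->
  forall y, A *m (A *m y) = 0 -> A *m y = 0.
Proof.
move=> rmA y Ay0.
have Ay_ge0 : nonneg (A *m y).
  by apply: rmA; [rewrite Ay0 => i; rewrite mxE | exists y].
have Ay_le0 : nonneg (- (A *m y)).
  apply: rmA; last by exists (- y); rewrite mulmxN.
  by rewrite mulmxN Ay0 oppr0 => i; rewrite mxE.
apply/matrixP => i j; rewrite (ord1 j) [RHS]mxE.
apply/eqP; rewrite eq_le Ay_ge0 andbT.
by have := Ay_le0 i; rewrite mxE oppr_ge0.
Qed.

Lemma group_inverse_of_factors A V W :
  V *m A *m A = A -> A *m A *m W = A -> group_inverse A (V *m A *m W).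
Proof.
move=> eV eW; set P := A *m W.
have VA : V *m A = P by rewrite /P -{1}eW !mulmxA eV.
have AP : A *m P = A by rewrite mulmxA.
have PA : P *m A = A by rewrite -VA.
have XV : V *m A *m W = V *m P by rewrite mulmxA.
have XP : V *m A *m W = P *m W by rewrite VA.
have AX : A *m (V *m A *m W) = P by rewrite XP mulmxA AP.
have XA : V *m A *m W *m A = P by rewrite XV -mulmxA PA.
have PP : P *m P = P by rewrite {2}/P mulmxA PA.
split; first by rewrite AX PA.
  by rewrite XA XP mulmxA PP.
by rewrite AX XA.
Qed.

Lemma group_inverse_exists A :
  \rank (A *m A) = \rank A -> exists X, group_inverse A X.
Proof.
move=> rkA2.
have /submxP [V eV] : (A <= A *m A)%MS.
  by rewrite -(mxrank_leqif_sup (submxMl A A)).2 rkA2.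
have /submxP [W eW] : (A^T <= A^T *m A^T)%MS.
  by rewrite -(mxrank_leqif_sup (submxMl _ _)).2 -trmx_mul !mxrank_tr rkA2.
exists (V *m A *m W^T); apply: group_inverse_of_factors.
  by rewrite -mulmxA -eV.
by apply: trmx_inj; rewrite !trmx_mul trmxK -eW.
Qed.

Lemma group_inverse_range_mulK A X x :
  group_inverse A X -> in_range X x -> A *m (X *m x) = x.
Proof. by move=> [_ XAX AX_XA] [z ->]; rewrite !mulmxA AX_XA XAX. Qed.

Lemma group_inverse_KM_nonneg A X x : range_monotone A -> group_inverse A X ->
  KM X x -> nonneg (X *m x).
Proof.
move=> rmA gi [x_ge0 xX]; apply: rmA; first by rewrite group_inverse_range_mulK.
by exists (X *m (X *m x)); rewrite group_inverse_range_mulK //; exists x.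
Qed.

Lemma tr_mulmx_sum x y : (x^T *m y) 0 0 = \sum_i x i 0 * y i 0.
Proof. by rewrite mxE; apply: eq_bigr => i _; rewrite mxE. Qed.

Lemma Zmatrix_complementary_eq0 A y : Zmatrix A -> nonneg y ->
  nonneg (A *m y) -> (forall i, (A *m y) i 0 * y i 0 = 0) -> A *m y = 0.
Proof.
move=> zA y_ge0 Ay_ge0 compl; apply/matrixP => i j; rewrite (ord1 j) [RHS]mxE.
have [yi0|yi_neq0] := eqVneq (y i 0) 0; last first.
  by have /eqP := compl i; rewrite mulf_eq0 (negbTE yi_neq0) orbF => /eqP.
apply/eqP; rewrite eq_le Ay_ge0 andbT mxE; apply: sumr_le0 => k _.
have [<-|ik] := eqVneq i k; first by rewrite yi0 mulr0.
by apply: mulr_le0_ge0; [exact: zA | exact: y_ge0].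
Qed.

Lemma LCP_group_inverse_eq0 A X q : Zmatrix A -> range_monotone A ->
  group_inverse A X -> nonneg q -> forall x, LCP_sol X q x -> x = 0.
Proof.
move=> zA rmA gi q_ge0 x [[x_ge0 xX] _ xXq0].
have y_ge0 := group_inverse_KM_nonneg rmA gi (conj x_ge0 xX).
have Ay := group_inverse_range_mulK gi xX.
set y := X *m x in y_ge0 Ay xXq0 *.
have xy0 i : x i 0 * y i 0 = 0.
  have terms_ge0 k : 0 <= x k 0 * (y + q) k 0.
    by rewrite mxE; apply/mulr_ge0/addr_ge0.
  rewrite tr_mulmx_sum in xXq0.
  move/(psumr_eq0P (fun k _ => terms_ge0 k))/(_ i isT)/eqP: xXq0.
  rewrite mxE mulrDr paddr_eq0 ?mulr_ge0 //.
  by case/andP => /eqP.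
by rewrite -Ay; apply: Zmatrix_complementary_eq0 => // [|i]; rewrite Ay.
Qed.

End RealMatrices.

Theorem mainTheorem10 (R : realType) (n : nat) (A : 'M[R]_n) :
  Zmatrix A -> range_monotone A ->
  (exists x : 'cV[R]_n, KM A x /\ x <> 0) ->
  (exists X : 'M[R]_n, group_inverse A X) /\
  (forall X : 'M[R]_n, group_inverse A X -> karamardian X).
Proof.
move=> zA rmA [x [[x_ge0 [z xAz]] x_neq0]]; subst x.
split; first exact: group_inverse_exists (mxrank_sqr_eq (range_monotone_inj rmA)).
move=> X gi; split.
  have [AXA _ AX_XA] := gi.
  exists (A *m z); split=> //; split; first exact: x_ge0.
  by exists (A *m A *m z); rewrite !mulmxA -AX_XA AXA.
have zero_ge0 : nonneg (0 : 'cV[R]_n) by move=> i; rewrite mxE.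
have one_ge0 : nonneg (const_mx 1 : 'cV[R]_n) by move=> i; rewrite mxE ler01.
exists (const_mx 1); split.
- exists (const_mx 1), 0; split; last by rewrite addr0.
    by move=> i; rewrite mxE ltr01.
  by rewrite /in_null mulmx0.
- exact: (LCP_group_inverse_eq0 zA rmA gi zero_ge0).
- exact: (LCP_group_inverse_eq0 zA rmA gi one_ge0).
Qed.
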